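(* Let $S(A)=\{a_n\}$ be independent and $S(B)=\{b_n\}$ be regular. Let $k$ be adequate with respect to $S(A)$. Let $A^{\ast}=\{a_0,a_1,\ldots,a_{2^k-1}\}$ and define $$A\otimes_k B=\{a_{2^k}b+a\mid a\in A^{\ast},\ b\in B\}.$$ Then $S(A\otimes_k B)$ is a regular Stanley sequence, which is independent if and only if $S(B)$ is, having description $$S(A\otimes_k B)=\{a_{2^k}b+a\mid a\in A^{\ast},\ b\in S(B)\},$$ with character $\lambda(A\otimes_k B)=a_{2^k}\cdot \lambda(B)+\lambda(A)$ and shift index $\sigma(A\otimes_k B)=2^k\cdot \sigma(B)$.
   Context: A set of nonnegative integers is 3-free if no three elements form an arithmetic progression. For a 3-free set $A=\{a_0<\cdots<a_k\}$ (all sequences assumed to start at $0$), the Stanley sequence $S(A)=\{a_n\}$ is defined greedily: each $a_{n+1}$ is the smallest integer greater than $a_n$ such that $\{a_0,\ldots,a_{n+1}\}$ is 3-free. A Stanley sequence $S(A)=\{a_n\}$ is independent if there is a constant $\lambda$ (its character $\lambda(A)$) such that for all sufficiently large $k$ and all $0\le i<2^k$, $a_{2^k+i}=a_{2^k}+a_i$ and $a_{2^k}=2a_{2^k-1}-\lambda+1$. A Stanley sequence $S(A)=\{a_n\}$ is regular if there exist constants $\lambda,\sigma$ and an independent Stanley sequence $\{a'_n\}$ of character $\lambda$ (the core) such that for all large $k$ and $0\le i<2^k$, $a_{2^k-\sigma+i}=a_{2^k-\sigma}+a'_i$ and $a_{2^k-\sigma}=2a_{2^k-\sigma-1}-\lambda+1$;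 these constants are unique, and $\lambda$ is called the character $\lambda(A)$ and $\sigma$ the shift index $\sigma(A)$. Independent sequences are exactly the regular ones with $\sigma=0$ and core equal to themselves. An integer $k_0$ is adequate for a regular sequence $S(A)$ if (i) the two defining equations hold for all $k\ge k_0$ and (ii) $a_{2^{k_0}-\sigma(A)}$ is not contained in the minimal-cardinality nucleating set of $S(A)$. *)

From mathcomp Require Import all_boot all_order all_algebra.
Set Implicit Arguments. Unset Strict Implicit. Unset Printing Implicit Defensive.
Import GRing.Theory Num.Theory.

(* A finite set of nonnegative integers is represented by a seq nat (set = its
   elements; order and repetitions irrelevant). *)

Definition three_free (s : seq nat) : bool :=
  all (fun x => all (fun y => all (fun z =>
    ~~ [&& x < y, y < z & x + z == y.*2]) s) s) s.

Definition stanley_set (A : seq nat) : bool := three_free A && (0 \in A).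

(* Greedy step: least m > last p such that p ++ [m] is 3-free
   (2 * last p + 1 always works when p is 3-free). *)
Definition next_term (p : seq nat) : nat :=
  let l := last 0 p in
  find (fun m => (l < m) && three_free (rcons p m)) (iota 0 (l.*2 + 2)).

Fixpoint stanley_prefix (As : seq nat) (n : nat) : seq nat :=
  match n with
  | 0 => [::]
  | n'.+1 => if n <= size As then take n As
             else let p := stanley_prefix As n' in rcons p (next_term p)
  end.

Definition stanley (A : seq nat) (n : nat) : nat :=
  nth 0 (stanley_prefix (sort leq (undup A)) n.+1) n.

Local Open Scope ring_scope.

Definition independent_with (a : nat -> nat) (lam : int) : Prop :=
  exists K : nat, forall k : nat, (K <= k)%N ->
    (forall i : nat, (i < 2 ^ k)%N -> a (2 ^ k + i)%N = (a (2 ^ k) + a i)%N) /\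
    (a (2 ^ k)%N)%:Z = 2 * (a (2 ^ k).-1)%:Z - lam + 1.

Definition independent (a : nat -> nat) : Prop := exists lam, independent_with a lam.

(* index 2^k - sigma (exact as soon as 2^k >= sigma) *)
Definition sidx (k : nat) (sigma : int) : nat := `|(2 ^ k)%N%:Z - sigma|%N.

Definition regular_eqs (a : nat -> nat) (lam sigma : int) (core : nat -> nat)
    (k : nat) : Prop :=
  (forall i : nat, (i < 2 ^ k)%N ->
     a (sidx k sigma + i)%N = (a (sidx k sigma) + core i)%N) /\
  (a (sidx k sigma))%:Z = 2 * (a (sidx k sigma).-1)%:Z - lam + 1.

Definition indep_stanley_core (core : nat -> nat) (lam : int) : Prop :=
  exists C : seq nat, [/\ stanley_set C, core =1 stanley C & independent_with core lam].

Definition regular_with (a : nat -> nat) (lam sigma : int) (core : nat -> nat) : Prop :=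
  indep_stanley_core core lam /\
  exists K : nat, forall k : nat, (K <= k)%N -> regular_eqs a lam sigma core k.

Definition regular (a : nat -> nat) : Prop :=
  exists lam sigma core, regular_with a lam sigma core.

Definition nucleating (A N : seq nat) : Prop :=
  stanley_set N /\ stanley N =1 stanley A.

Definition min_nucleating (A N : seq nat) : Prop :=
  nucleating A N /\ forall N', nucleating A N' -> (size (undup N) <= size (undup N'))%N.

Definition adequate (A : seq nat) (lam sigma : int) (core : nat -> nat) (k0 : nat) : Prop :=
  (forall k : nat, (k0 <= k)%N -> regular_eqs (stanley A) lam sigma core k) /\
  (forall N, min_nucleating A N -> stanley A (sidx k0 sigma) \notin N).

Definition Astar (A : seq nat) (k : nat) : seq nat :=
  [seq stanley A i | i <- iota 0 (2 ^ k)].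

Definition otimes (A : seq nat) (k : nat) (B : seq nat) : seq nat :=
  [seq (stanley A (2 ^ k) * b + x)%N | x <- Astar A k, b <- B].

(* Write [a = S(A)] and [P = 2^k], and read [a_P b + a_i] ([i < P]) as a quotient
   [b] with a digit [a_i < a_P]; [A (x)_k B] consists of these numbers with [b] in
   [B]. Those with [b] in [S(B)] form a 3-free set: a progression among them splits
   into a progression of quotients and one of digits, up to a carry of one, and a
   carry would give a progression in [S(A)] through the copies [a_(P+i) = a_P + a_i].
   Conversely, a number [m = a_P q + r] past the nucleus that is not of this form
   ends a progression: either [r] is a digit and [q] is rejected by [S(B)], or [r]
   (or its copy [a_(2P) + r]) is rejected by [S(A)] and [q] (or [q - 1] after a
   carry) lies in [S(B)] or is rejected by it. Being 3-free and greedy determines a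
   Stanley sequence, and the defining equations of [S(B)] at level [K] become those
   of [S(A (x)_k B)] at level [K + k]. *)

From mathcomp Require Import all_boot all_order all_algebra.
From mathcomp Require Import zify.
From Stdlib Require Import Classical FunctionalExtensionality Wf_nat.
Import GRing.Theory Num.Theory.

Set Implicit Arguments.
Unset Strict Implicit.
Unset Printing Implicit Defensive.

Definition in_image (f : nat -> nat) (x : nat) : Prop := exists i, f i = x.

Definition three_free_pred (P : nat -> Prop) : Prop :=
  forall x y z, P x -> P y -> P z -> x < y -> y < z -> x + z <> y.*2.

(* [m] is the last term of a progression [x < y < m] in [P], so a greedy
   3-free extension of [P] skips it. *)
Definition rejects (P : nat -> Prop) (m : nat) : Prop :=
  exists x y, [/\ P x, P y, x < m & x + m = y.*2].

Lemma three_freeP s : reflect (three_free_pred (fun x => x \in s)) (three_free s).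
Proof.
apply: (iffP idP) => [/allP tf x y z xs ys zs xy yz E | tf].
  have /allP/(_ y ys)/allP/(_ z zs) := tf x xs.
  by rewrite xy yz E eqxx.
apply/allP=> x xs; apply/allP=> y ys; apply/allP=> z zs.
by apply/negP=> /and3P[xy yz /eqP]; apply: tf.
Qed.

Lemma three_free_pred_eq P x y z : three_free_pred P ->
  P x -> P y -> P z -> x + z = y.*2 -> x = z.
Proof.
move=> tf Px Py Pz E; case: (ltngtP x z) => // [xz|zx].
  by case: (tf x y z) => //; lia.
by case: (tf z y x) => //; lia.
Qed.

Lemma three_free_sub P s : three_free_pred P -> (forall x, x \in s -> P x) ->
  three_free s.
Proof. by move=> tf sP; apply/three_freeP => x y z /sP Px /sP Py /sP Pz; apply: tf. Qed.

Lemma three_free_rconsP p m : three_free p -> (forall x, x \in p -> x < m) ->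
  three_free (rcons p m) <-> ~ rejects (fun x => x \in p) m.
Proof.
move=> /three_freeP tf ltm; split.
  move=> /three_freeP tfm [x [y [xp yp xm E]]].
  by apply: (tfm x y m); rewrite ?mem_rcons ?in_cons ?xp ?yp ?eqxx ?orbT //; lia.
move=> nrej; apply/three_freeP => x y z; rewrite !mem_rcons !in_cons.
move=> /orP[/eqP->|xp] /orP[/eqP->|yp] /orP[/eqP->|zp] xy yz E; try lia.
- by move: (ltm y yp) => ?; lia.
- by move: (ltm z zp) => ?; lia.
- by apply: nrej; exists x, y; split => //; lia.
- exact: tf xy yz E.
Qed.

Lemma next_term_spec p : three_free p -> (forall x, x \in p -> x <= last 0 p) ->
  [/\ last 0 p < next_term p, three_free (rcons p (next_term p)) &
     forall m, last 0 p < m < next_term p -> ~~ three_free (rcons p m)].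
Proof.
move=> tf lelast; rewrite /next_term.
set l := last 0 p; set ok := fun m => (l < m) && three_free (rcons p m).
have ok_double : ok l.*2.+1.
  rewrite /ok ltnS -addnn leq_addr /=; apply/three_free_rconsP => //.
    by move=> x /lelast; lia.
  by move=> [x [y [_ /lelast yl _ E]]]; lia.
have has_ok : has ok (iota 0 (l.*2 + 2)).
  by apply/hasP; exists l.*2.+1 => //; rewrite mem_iota; lia.
set i := find ok _.
have i_lt : i < l.*2 + 2 by rewrite -[X in _ < X](size_iota 0) -has_find.
have := nth_find 0 has_ok; rewrite -/i nth_iota // add0n => /andP[li tfi].
split => // m /andP[lm mi].
have := before_find 0 mi; rewrite nth_iota; last lia.
by rewrite add0n /ok lm /= => ->.
Qed.

Notation nucleus A := (sort leq (undup A)).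

Lemma size_stanley_prefix s n : size (stanley_prefix s n) = n.
Proof.
elim: n => //= n IH; case: ifP => [le_ns|_]; first by rewrite size_takel.
by rewrite size_rcons IH.
Qed.

Lemma stanley_prefix_small s n : n <= size s -> stanley_prefix s n = take n s.
Proof. by case: n => [|n] /= le_ns; rewrite ?take0 ?le_ns. Qed.

Lemma stanley_prefix_take s n m : n <= m ->
  stanley_prefix s n = take n (stanley_prefix s m).
Proof.
elim: m => [|m IH] le_nm; first by move: le_nm; rewrite leqn0 => /eqP->.
case: (ltnP m n) => [lt_mn|le_nm'].
  have -> : n = m.+1 by lia.
  by rewrite -[X in take X _](size_stanley_prefix s m.+1) take_size.
rewrite IH // [stanley_prefix s m.+1]/=; case: ifP => le_ms.
  by rewrite stanley_prefix_small ?take_takel //; lia.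
by rewrite -cats1 takel_cat // size_stanley_prefix.
Qed.

Lemma stanley_prefixE A n : stanley_prefix (nucleus A) n = mkseq (stanley A) n.
Proof.
apply: (eq_from_nth (x0 := 0)); first by rewrite size_stanley_prefix size_mkseq.
move=> i; rewrite size_stanley_prefix => lt_in; rewrite nth_mkseq // /stanley.
by rewrite (@stanley_prefix_take _ i.+1 n) // nth_take.
Qed.

Lemma stanley_nucleus A i : i < size (nucleus A) -> stanley A i = nth 0 (nucleus A) i.
Proof. by move=> lt_iA; rewrite /stanley stanley_prefix_small // nth_take. Qed.

Lemma stanley_next A n : size (nucleus A) <= n ->
  stanley A n = next_term (mkseq (stanley A) n).
Proof.
move=> le_An; rewrite {1}/stanley /= ifN; last by rewrite -ltnNge ltnS.
by rewrite nth_rcons size_stanley_prefix ltnn eqxx stanley_prefixE.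
Qed.

Lemma mem_mkseqP (f : nat -> nat) n x :
  reflect (exists2 i, i < n & f i = x) (x \in mkseq f n).
Proof.
apply: (iffP mapP) => [[i]|[i lt_in <-]]; last by exists i; rewrite ?mem_iota.
by rewrite mem_iota add0n => /andP[_ lt_in] ->; exists i.
Qed.

Lemma sorted_nucleus A : sorted ltn (nucleus A).
Proof.
by rewrite ltn_sorted_uniq_leq sort_uniq undup_uniq sort_sorted //; exact: leq_total.
Qed.

Lemma mem_nucleus A x : (x \in nucleus A) = (x \in A).
Proof. by rewrite mem_sort mem_undup. Qed.

Lemma nucleus_gt0 A : stanley_set A -> 0 < size (nucleus A).
Proof.
by case/andP=> _; rewrite -mem_nucleus; case: (nucleus A).
Qed.

Lemma stanley0 A : stanley_set A -> stanley A 0 = 0.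
Proof.
move=> sA; rewrite stanley_nucleus ?nucleus_gt0 //.
have : 0 \in nucleus A by rewrite mem_nucleus; case/andP: sA.
have := sorted_nucleus A; case: (nucleus A) => [|x s] //= sorted_xs.
rewrite in_cons => /orP[/eqP-> //|in0].
have /allP/(_ 0 in0) := order_path_min ltn_trans sorted_xs.
by rewrite ltn0.
Qed.

Lemma next_term_mkseq f n : 0 < n -> three_free (mkseq f n) ->
  (forall i, i < n -> f i <= f n.-1) ->
  [/\ f n.-1 < next_term (mkseq f n),
      three_free (rcons (mkseq f n) (next_term (mkseq f n))) &
      forall m, f n.-1 < m < next_term (mkseq f n) -> ~~ three_free (rcons (mkseq f n) m)].
Proof.
move=> n_gt0 tf le_last.
have lastE : last 0 (mkseq f n) = f n.-1.
  by case: n n_gt0 {tf le_last} => // n _; rewrite mkseqS last_rcons.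
rewrite -lastE; apply: next_term_spec => // x /mem_mkseqP[i lt_in <-].
by rewrite lastE; apply: le_last.
Qed.

Lemma stanley_prefix_inv A n : stanley_set A ->
  three_free (mkseq (stanley A) n) /\
  (forall i j, i < j < n -> stanley A i < stanley A j).
Proof.
move=> sA; have /andP[tfA _] := sA; have nA_gt0 := nucleus_gt0 sA.
elim: n => [|n [tf incr]]; first by split=> // i j; lia.
case: (leqP n.+1 (size (nucleus A))) => [le_nA|lt_An].
  split.
    rewrite -stanley_prefixE stanley_prefix_small //.
    apply: (three_free_sub (three_freeP _ tfA)) => x /mem_take.
    by rewrite mem_nucleus.
  move=> i j /andP[lt_ij lt_jn]; rewrite !stanley_nucleus; try lia.
  by apply: (sorted_ltn_nth ltn_trans 0 (sorted_nucleus A)); rewrite ?inE; lia.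
have le_last : forall i, i < n -> stanley A i <= stanley A n.-1.
  move=> i lt_in; case: (ltnP i n.-1) => [lt_i|ge_i]; first by apply/ltnW/incr; lia.
  by have -> : i = n.-1 by lia.
have n_gt0 : 0 < n by lia.
have [gt_next tf_next _] := next_term_mkseq n_gt0 tf le_last.
rewrite -stanley_next in gt_next tf_next; try lia.
rewrite mkseqS; split => // i j /andP[lt_ij]; rewrite ltnS leq_eqVlt.
move=> /orP[/eqP eq_jn | lt_jn]; last by apply: incr; lia.
by rewrite eq_jn; apply: leq_ltn_trans gt_next; apply: le_last; lia.
Qed.

Lemma stanley_incr A : stanley_set A -> {homo stanley A : i j / i < j}.
Proof. by move=> sA i j lt_ij; apply: (proj2 (stanley_prefix_inv j.+1 sA)); lia. Qed.

Lemma stanley_three_free A : stanley_set A -> three_free_pred (in_image (stanley A)).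
Proof.
move=> sA x y z [i <-] [j <-] [l <-].
have [/three_freeP tf _] := stanley_prefix_inv (maxn i (maxn j l)).+1 sA.
by apply: tf; apply/mem_mkseqP; [exists i | exists j | exists l]; lia.
Qed.

Lemma leq_incr_id (f : nat -> nat) : {homo f : i j / i < j} -> forall n, n <= f n.
Proof. by move=> incr; elim=> // n IH; have := incr n n.+1 (ltnSn n); lia. Qed.

Lemma stanley_greedy A m : stanley_set A ->
  stanley A (size (nucleus A)).-1 < m -> ~ in_image (stanley A) m ->
  rejects (in_image (stanley A)) m.
Proof.
move=> sA gt_m notin; have nA_gt0 := nucleus_gt0 sA.
have incr := stanley_incr sA; have mono := leq_mono incr.
have [n lt_mn min_n] : exists2 n, m < stanley A n & forall j, m < stanley A j -> n <= j.
  have ex : exists n, m < stanley A n by exists m.+1; have := leq_incr_id incr m.+1; lia.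
  by case: (ex_minnP ex) => n; exists n.
have le_An : size (nucleus A) <= n.
  rewrite leqNgt; apply/negP => lt_nA.
  have : stanley A n <= stanley A (size (nucleus A)).-1 by rewrite mono; lia.
  lia.
have n_gt0 : 0 < n by lia.
have lt_prev : stanley A n.-1 < m.
  case: (ltngtP (stanley A n.-1) m) => // [lt_m | eq_m]; first by have := min_n _ lt_m; lia.
  by case: notin; exists n.-1.
have [tf _] := stanley_prefix_inv n sA.
have le_last : forall i, i < n -> stanley A i <= stanley A n.-1.
  by move=> i lt_in; rewrite mono; lia.
have [_ _ below] := next_term_mkseq n_gt0 tf le_last.
have not_tf : ~~ three_free (rcons (mkseq (stanley A) n) m).
  by apply: below; rewrite -stanley_next // lt_prev.
have lt_pm : forall x, x \in mkseq (stanley A) n -> x < m.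
  by move=> x /mem_mkseqP[i lt_in <-]; have := le_last i lt_in; lia.
have [x [y [xp yp lt_xm E]]] : rejects (fun x => x \in mkseq (stanley A) n) m.
  by apply: NNPP => norej; move/negP: not_tf; apply; apply/three_free_rconsP.
case/mem_mkseqP: xp => i _ xE; case/mem_mkseqP: yp => j _ yE.
by exists x, y; split => //; [exists i | exists j].
Qed.

Lemma eq_stanley A T : stanley_set A -> {homo T : i j / i < j} ->
  three_free_pred (in_image T) ->
  (forall i, i < size (nucleus A) -> T i = nth 0 (nucleus A) i) ->
  (forall m, T (size (nucleus A)).-1 < m -> ~ in_image T m -> rejects (in_image T) m) ->
  stanley A =1 T.
Proof.
move=> sA incr tfT nucT greedyT; have nA_gt0 := nucleus_gt0 sA.
have mono := leq_mono incr; have smono := leqW_mono mono.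
elim/ltn_ind => n IH.
case: (ltnP n (size (nucleus A))) => [lt_nA|le_An]; first by rewrite stanley_nucleus // nucT.
have n_gt0 : 0 < n by lia.
have -> : stanley A n = next_term (mkseq T n).
  rewrite stanley_next //; congr next_term.
  by apply/eq_in_map => i; rewrite mem_iota => /andP[_ lt_in]; apply: IH.
have tf : three_free (mkseq T n).
  by apply: (three_free_sub tfT) => x /mem_mkseqP[i _ <-]; exists i.
have le_last : forall i, i < n -> T i <= T n.-1 by move=> i lt_in; rewrite mono; lia.
have [gt_next tf_next below] := next_term_mkseq n_gt0 tf le_last.
set m := next_term _ in gt_next tf_next below *.
case: (ltngtP m (T n)) => // [lt_mT | lt_Tm]; exfalso.
- have notin : ~ in_image T m.
    move=> [i iE]; case: (ltnP i n) => [lt_in | le_ni]; first by have := le_last i lt_in; lia.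
    have : T n <= T i by rewrite mono.
    lia.
  have lt_Am : T (size (nucleus A)).-1 < m by apply: leq_ltn_trans gt_next; rewrite mono; lia.
  have [x [y [[i xE] [j yE] lt_xm E]]] := greedyT m lt_Am notin.
  have lt_pm : forall x, x \in mkseq T n -> x < m.
    by move=> _ /mem_mkseqP[l lt_ln <-]; have := le_last l lt_ln; lia.
  apply: (proj1 (three_free_rconsP tf lt_pm) tf_next); exists x, y.
  by split=> //; apply/mem_mkseqP; [exists i | exists j];
    rewrite // -(smono _ n) ?xE ?yE; lia.
- have /negP[] : ~~ three_free (rcons (mkseq T n) (T n)).
    by apply: below; rewrite incr ?lt_Tm //; lia.
  apply: (three_free_sub tfT) => x; rewrite mem_rcons in_cons.
  by case/orP=> [/eqP-> | /mem_mkseqP[i _ <-]]; eexists.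
Qed.

Lemma exists_min_nucleating A : stanley_set A -> exists N, min_nucleating A N.
Proof.
move=> sA; pose card_nucleating n := exists N, nucleating A N /\ size (undup N) = n.
have ex_card : exists n, card_nucleating n by exists (size (undup A)), A.
have [n [[[N [nucN <-]] min_n] _]] :=
  dec_inh_nat_subset_has_unique_least_element card_nucleating
  (fun n => classic (card_nucleating n)) ex_card.
by exists N; split=> // N' nucN'; apply/leP/min_n; exists N'.
Qed.

Lemma stanley_greedy_past_min_nucleating A n : stanley_set A ->
  (forall N, min_nucleating A N -> stanley A n \notin N) ->
  forall m, stanley A n.-1 < m -> ~ in_image (stanley A) m ->
  rejects (in_image (stanley A)) m.
Proof.
move=> sA notinN m lt_m notin.
have [N minN] := exists_min_nucleating sA.
have [[sN eqNA] _] := minN; have := notinN N minN.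
rewrite -(functional_extensionality _ _ eqNA) in lt_m notin * => notin_n.
have le_Nn : size (nucleus N) <= n.
  rewrite leqNgt; apply/negP => lt_nN.
  by move: notin_n; rewrite stanley_nucleus // -mem_nucleus mem_nth.
have nN_gt0 := nucleus_gt0 sN.
apply: stanley_greedy => //; apply: leq_ltn_trans lt_m.
by rewrite (leq_mono (stanley_incr sN)); lia.
Qed.

Record adequate_block (a : nat -> nat) (P : nat) (lam : int) : Prop := {
  ab_incr : {homo a : i j / i < j};
  ab_three_free : three_free_pred (in_image a);
  ab_0 : a 0 = 0;
  ab_gt0 : 0 < P;
  ab_shift : forall i, i < P -> a (P + i) = a P + a i;
  ab_shift2 : forall i, i <= P -> a (P.*2 + i) = 3 * a P + a i;
  ab_greedy : forall m, a P.-1 < m -> ~ in_image a m -> rejects (in_image a) m;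
  ab_char : ((a P)%:Z = 2 * (a P.-1)%:Z - lam + 1)%R
}.

Lemma adequate_block_stanley A k lam : stanley_set A ->
  adequate A lam 0 (stanley A) k -> adequate_block (stanley A) (2 ^ k) lam.
Proof.
move=> sA [eqs_k minN].
have sidx0 j : sidx j 0 = 2 ^ j by rewrite /sidx GRing.subr0.
have [shift1 char1] := eqs_k k (leqnn k); have [shift2 char2] := eqs_k k.+1 (leqnSn k).
rewrite !sidx0 in shift1 char1 shift2 char2.
set a := stanley A in shift1 char1 shift2 char2 *.
have P_gt0 : 0 < 2 ^ k by rewrite expn_gt0.
have exp2S : 2 ^ k.+1 = (2 ^ k).*2 by rewrite expnS mul2n.
have a_2P : a (2 ^ k).*2 = 3 * a (2 ^ k).
  have last2P : a (2 ^ k.+1).-1 = a (2 ^ k) + a (2 ^ k).-1.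
    by rewrite exp2S -shift1; [congr a | ]; lia.
  by move: char2; rewrite last2P exp2S; lia.
split=> //.
- exact: stanley_incr.
- exact: stanley_three_free.
- exact: stanley0.
- by move=> i le_iP; rewrite -a_2P -exp2S shift2 // exp2S; lia.
- by apply: stanley_greedy_past_min_nucleating => // N /minN; rewrite sidx0.
Qed.

Definition otimes_seq (a : nat -> nat) (P : nat) (c : nat -> nat) (n : nat) : nat :=
  a P * c (n %/ P) + a (n %% P).

Lemma otimes_seqE a P c j i : i < P -> otimes_seq a P c (j * P + i) = a P * c j + a i.
Proof.
move=> lt_iP; have P_gt0 : 0 < P by lia.
by rewrite /otimes_seq divnMDl // divn_small // addn0 modnMDl modn_small.
Qed.

Lemma otimes_seq_imageP a P c x : 0 < P ->
  in_image (otimes_seq a P c) x <-> exists2 i, i < P & exists j, x = a P * c j + a i.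
Proof.
move=> P_gt0; split=> [[n <-] | [i lt_iP [j ->]]].
  by exists (n %% P); rewrite ?ltn_pmod //; exists (n %/ P).
by exists (j * P + i); rewrite otimes_seqE.
Qed.

Section Otimes.

Variables (a : nat -> nat) (P : nat) (lam : int).
Hypothesis ha : adequate_block a P lam.

Lemma adequate_block_lt i : i < P -> a i < a P.
Proof. exact: (ab_incr ha). Qed.

Lemma adequate_block_gt0 : 0 < a P.
Proof. by have := ab_incr ha (ab_gt0 ha); rewrite (ab_0 ha). Qed.

Lemma in_image_otimes_seq c j i : i < P -> in_image (otimes_seq a P c) (a P * c j + a i).
Proof. by move=> lt_iP; exists (j * P + i); rewrite otimes_seqE. Qed.

Lemma otimes_seq_incr c : {homo c : i j / i < j} -> {homo otimes_seq a P c : m n / m < n}.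
Proof.
move=> incr n n' lt_nn'; have P_gt0 := ab_gt0 ha.
rewrite (divn_eq n P) (divn_eq n' P) !otimes_seqE ?ltn_pmod //.
have : n %/ P <= n' %/ P by apply: leq_div2r; lia.
rewrite leq_eqVlt => /orP[/eqP eq_q | lt_q].
  rewrite eq_q ltn_add2l; apply: ab_incr ha _ _ _.
  by move: (divn_eq n P) (divn_eq n' P); rewrite eq_q; lia.
have := incr _ _ lt_q; have := adequate_block_lt (ltn_pmod n P_gt0).
rewrite -(ltn_pmul2l adequate_block_gt0); nia.
Qed.

Lemma otimes_seq_ap_eq c s1 s2 s3 r1 r2 r3 : three_free_pred (in_image c) ->
  in_image c s1 -> in_image c s2 -> in_image c s3 -> r1 < P -> r2 < P -> r3 < P ->
  (a P * s1 + a r1) + (a P * s3 + a r3) = (a P * s2 + a r2).*2 ->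
  s1 = s3 /\ a r1 = a r3.
Proof.
move=> tfc cs1 cs2 cs3 lt_r1 lt_r2 lt_r3 E.
have D_gt0 := adequate_block_gt0.
have := adequate_block_lt lt_r1; have := adequate_block_lt lt_r2.
have := adequate_block_lt lt_r3; set D := a P => b3 b2 b1.
have tfa := ab_three_free ha.
have in_a i : in_image a (a i) by exists i.
have in_aD i : i < P -> in_image a (D + a i) by exists (P + i); rewrite (ab_shift ha).
have carry_lt : s1 + s3 < s2.*2 + 2 by rewrite -(ltn_pmul2l D_gt0); lia.
have carry_gt : s2.*2 < s1 + s3 + 2 by rewrite -(ltn_pmul2l D_gt0); lia.
have [c0 | c1 | c2] : [\/ s1 + s3 = s2.*2, s1 + s3 = s2.*2 + 1 | s2.*2 = s1 + s3 + 1].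
  by case: (ltngtP (s1 + s3) s2.*2) => ?; [apply: Or33 | apply: Or32 | apply: Or31]; lia.
- have /(congr1 (muln D)) c0D := c0.
  have : a r1 + a r3 = (a r2).*2 by lia.
  move/(three_free_pred_eq tfa (in_a r1) (in_a r2) (in_a r3)) => ->.
  by split=> //; apply: (three_free_pred_eq tfc cs1 cs2 cs3); lia.
- have /(congr1 (muln D)) c1D := c1.
  have : a r1 + (D + a r3) = (a r2).*2 by lia.
  by move/(three_free_pred_eq tfa (in_a r1) (in_a r2) (in_aD r3 lt_r3)); lia.
- have /(congr1 (muln D)) c2D := c2.
  have : a r3 + (D + a r1) = (D + a r2).*2 by lia.
  by move/(three_free_pred_eq tfa (in_a r3) (in_aD r2 lt_r2) (in_aD r1 lt_r1)); lia.
Qed.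

Lemma otimes_seq_three_free c : three_free_pred (in_image c) ->
  three_free_pred (in_image (otimes_seq a P c)).
Proof.
move=> tfc _ _ _ [n1 <-] [n2 <-] [n3 <-]; have P_gt0 := ab_gt0 ha.
rewrite (divn_eq n1 P) (divn_eq n2 P) (divn_eq n3 P) !otimes_seqE ?ltn_pmod //.
have in_c j : in_image c (c j) by exists j.
move=> lt12 lt23 /(otimes_seq_ap_eq tfc (in_c _) (in_c _) (in_c _)).
by case; rewrite ?ltn_pmod //; lia.
Qed.

Lemma adequate_block_decomp j : a j < 4 * a P ->
  exists2 i, i < P & [\/ a j = a i, a j = a P + a i | a j = 3 * a P + a i].
Proof.
move=> lt_j4; have P_gt0 := ab_gt0 ha; have mono := leqW_mono (leq_mono (ab_incr ha)).
have lt_j3P : j < P.*2 + P by rewrite -mono (ab_shift2 ha) //; lia.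
case: (ltnP j P) => [lt_jP | le_Pj]; first by exists j => //; apply: Or31.
case: (ltnP j P.*2) => [lt_j2P | le_2Pj].
  exists (j - P); first lia.
  by apply: Or32; rewrite -(ab_shift ha); [congr a | ]; lia.
exists (j - P.*2); first lia.
by apply: Or33; rewrite -(ab_shift2 ha); [congr a | ]; lia.
Qed.

Lemma adequate_block_rejects_residue r : r < a P -> ~ in_image a r ->
  exists i1 i2, [/\ i1 < P, i2 < P &
    (a i1 < r /\ a i1 + r = (a i2).*2) \/ a i1 + r + a P = (a i2).*2].
Proof.
move=> lt_rP notin; have P_gt0 := ab_gt0 ha.
have smono := leqW_mono (leq_mono (ab_incr ha)).
have lt_last := adequate_block_lt (ltac:(lia) : P.-1 < P).
case: (ltngtP (a P.-1) r) => [lt_r | gt_r | eq_r]; last by case: notin; exists P.-1.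
  have [_ [_ [[i1 <-] [i2 <-] lt_1r E]]] := ab_greedy ha lt_r notin.
  by exists i1, i2; split; [rewrite -smono | rewrite -smono | left]; lia.
(* Greediness says nothing below [a_(P-1)]: use the copy [a_(2P) + r = 3 a_P + r] of [r]. *)
have notin3 : ~ in_image a (3 * a P + r).
  move=> [j jE]; have [i lt_iP] := adequate_block_decomp (j := j) (ltac:(lia)).
  have lt_i := adequate_block_lt lt_iP.
  by case=> ajE; rewrite ajE in jE; try lia; apply: notin; exists i; lia.
have lt3 : a P.-1 < 3 * a P + r by lia.
have [_ [_ [[j1 <-] [j2 <-] lt_1 E]]] := ab_greedy ha lt3 notin3.
have [i1 lt_i1 d1] := adequate_block_decomp (j := j1) (ltac:(lia)).
have [i2 lt_i2 d2] := adequate_block_decomp (j := j2) (ltac:(lia)).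
have := adequate_block_lt lt_i1; have := adequate_block_lt lt_i2.
exists i1, i2; split => //.
by case: d1 d2 => d1 [] d2; first [lia | by left; lia | by right; lia].
Qed.

End Otimes.

Lemma in_image_or_rejects (c : nat -> nat) n0 q :
  (forall m, c n0 < m -> ~ in_image c m -> rejects (in_image c) m) -> c n0 <= q ->
  exists z1 z2, [/\ in_image c z1, in_image c z2, z1 <= q & z1 + q = z2.*2].
Proof.
move=> greedy le_q; case: (classic (in_image c q)) => [cq | notin].
  by exists q, q; split=> //; lia.
have lt_q : c n0 < q.
  by rewrite ltn_neqAle le_q andbT; apply/eqP => eq_q; apply: notin; exists n0.
by have [z1 [z2 [cz1 cz2 lt_z E]]] := greedy q lt_q notin; exists z1, z2; split=> //; lia.
Qed.

Section OtimesGreedy.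

Variables (a : nat -> nat) (P : nat) (lam : int) (c : nat -> nat) (n0 : nat).
Hypothesis ha : adequate_block a P lam.
Hypothesis c_greedy : forall m, c n0 < m -> ~ in_image c m -> rejects (in_image c) m.

Lemma otimes_rejects_of_pair z1 z2 i1 i2 m : in_image c z1 -> in_image c z2 ->
  i1 < P -> i2 < P -> a P * z1 + a i1 < m -> a P * z1 + a i1 + m = (a P * z2 + a i2).*2 ->
  rejects (in_image (otimes_seq a P c)) m.
Proof.
move=> [j1 <-] [j2 <-] lt_i1 lt_i2 lt_m E.
by exists (a P * c j1 + a i1), (a P * c j2 + a i2); split=> //; apply: in_image_otimes_seq.
Qed.

(* The quotient [q] need only be weakly rejected ([z1 <= q]): the digit inequality
   [a_P q + a_i1 < m] keeps the lifted progression strict. *)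
Lemma otimes_rejects_of_digits q i1 i2 m : c n0 <= q -> i1 < P -> i2 < P ->
  a P * q + a i1 < m -> a i1 + m = a P * q + (a i2).*2 ->
  rejects (in_image (otimes_seq a P c)) m.
Proof.
move=> le_q lt_i1 lt_i2 lt_m E.
have [z1 [z2 [cz1 cz2 le_z E']]] := in_image_or_rejects c_greedy le_q.
apply: (otimes_rejects_of_pair cz1 cz2 lt_i1 lt_i2).
  by apply: leq_ltn_trans lt_m; rewrite leq_add2r leq_mul2l le_z orbT.
by have /(congr1 (muln (a P))) := E'; lia.
Qed.

Lemma otimes_seq_greedy m : a P * c n0 + a P.-1 < m ->
  ~ in_image (otimes_seq a P c) m -> rejects (in_image (otimes_seq a P c)) m.
Proof.
move=> lt_m notin; have D_gt0 := adequate_block_gt0 ha; have P_gt0 := ab_gt0 ha.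
have smono := leqW_mono (leq_mono (ab_incr ha)).
set q := m %/ a P; set r := m %% a P.
have mE : m = a P * q + r by rewrite /q /r mulnC -divn_eq.
have lt_r : r < a P by apply: ltn_pmod.
clearbody q r.
have le_q : c n0 <= q by rewrite leqNgt; apply/negP => lt_q; have := lt_q; nia.
case: (classic (exists2 i, i < P & a i = r)) => [[i lt_i iE] | no_digit].
  have notin_q : ~ in_image c q.
    by move=> [j jE]; apply: notin; exists (j * P + i); rewrite otimes_seqE // jE iE.
  have lt_q : c n0 < q.
    by rewrite ltn_neqAle le_q andbT; apply/eqP => eq_q; apply: notin_q; exists n0.
  have [z1 [z2 [cz1 cz2 lt_z E]]] := c_greedy lt_q notin_q.
  have lt_Dz : a P * z1 < a P * q by rewrite ltn_pmul2l.
  apply: (otimes_rejects_of_pair cz1 cz2 lt_i lt_i); first lia.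
  by have /(congr1 (muln (a P))) := E; lia.
have notin_r : ~ in_image a r.
  by move=> [j jE]; apply: no_digit; exists j; rewrite // -smono jE.
have lt_last := adequate_block_lt ha (ltac:(lia) : P.-1 < P).
have [i1 [i2 [lt_i1 lt_i2 [[lt_1r E] | E]]]] :=
  adequate_block_rejects_residue ha lt_r notin_r.
  by apply: (otimes_rejects_of_digits le_q lt_i1 lt_i2); lia.
have le_i2 : a i2 <= a P.-1 by rewrite (leq_mono (ab_incr ha)); lia.
have lt_q : c n0 < q.
  by rewrite ltn_neqAle le_q andbT; apply/eqP => eq_q; rewrite mE -eq_q in lt_m; lia.
have qE : a P * q = a P * q.-1 + a P by rewrite -mulnSr prednK //; lia.
by apply: (otimes_rejects_of_digits (q := q.-1) _ lt_i1 lt_i2); lia.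
Qed.

End OtimesGreedy.

Lemma mem_nucleusP Bs b :
  reflect (exists2 j, j < size (nucleus Bs) & stanley Bs j = b) (b \in Bs).
Proof.
rewrite -mem_nucleus; apply: (iffP idP) => [b_in | [j lt_j <-]].
  by exists (index b (nucleus Bs)); rewrite ?stanley_nucleus ?nth_index ?index_mem.
by rewrite stanley_nucleus // mem_nth.
Qed.

Lemma mem_otimes A k Bs x : 0 < 2 ^ k ->
  reflect (exists2 n, n < size (nucleus Bs) * 2 ^ k &
                      otimes_seq (stanley A) (2 ^ k) (stanley Bs) n = x)
          (x \in otimes A k Bs).
Proof.
move=> P_gt0; apply: (iffP allpairsP) =>
  [[[y b] /= [y_in /mem_nucleusP[j lt_j <-] ->]] | [n lt_n <-]].
  case/mem_mkseqP: y_in => i lt_i <-; exists (j * 2 ^ k + i); last by rewrite otimes_seqE.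
  by rewrite -ltn_divLR // divnMDl // divn_small // addn0.
exists (stanley A (n %% 2 ^ k), stanley Bs (n %/ 2 ^ k)); split => //=.
  by apply/mem_mkseqP; exists (n %% 2 ^ k); rewrite ?ltn_pmod.
by apply/mem_nucleusP; exists (n %/ 2 ^ k); rewrite ?ltn_divLR.
Qed.

Lemma predn_mul m n : 0 < m -> 0 < n -> (m * n).-1 = m.-1 * n + n.-1.
Proof. by case: m => // m _; case: n => // n _; rewrite mulSn /=; lia. Qed.

Lemma stanley_otimes A k lam Bs : adequate_block (stanley A) (2 ^ k) lam ->
  stanley_set Bs ->
  stanley_set (otimes A k Bs) /\
  stanley (otimes A k Bs) =1 otimes_seq (stanley A) (2 ^ k) (stanley Bs).
Proof.
move=> ha sB; have P_gt0 := ab_gt0 ha; have nB_gt0 := nucleus_gt0 sB.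
set T := otimes_seq (stanley A) (2 ^ k) (stanley Bs).
have incr : {homo T : m n / m < n} := otimes_seq_incr ha (stanley_incr sB).
have tfT : three_free_pred (in_image T) := otimes_seq_three_free ha (stanley_three_free sB).
have nucleusE : nucleus (otimes A k Bs) = mkseq T (size (nucleus Bs) * 2 ^ k).
  apply: (irr_sorted_eq ltn_trans ltnn (sorted_nucleus _)).
    exact: homo_sorted incr _ (iota_ltn_sorted 0 _).
  by move=> x; rewrite mem_nucleus; apply/(mem_otimes _ _ _ P_gt0)/mem_mkseqP.
have sC : stanley_set (otimes A k Bs).
  apply/andP; split.
    by apply: (three_free_sub tfT) => x /(mem_otimes _ _ _ P_gt0)[n _ <-]; exists n.
  apply/(mem_otimes _ _ _ P_gt0); exists 0; first by rewrite muln_gt0 nB_gt0.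
  by rewrite /T /otimes_seq div0n mod0n (ab_0 ha) (stanley0 sB) muln0.
split=> //; apply: eq_stanley => //.
  by move=> i; rewrite nucleusE size_mkseq => lt_i; rewrite nth_mkseq.
move=> m; rewrite nucleusE size_mkseq predn_mul // /T otimes_seqE; last lia.
exact: (otimes_seq_greedy ha (fun m => stanley_greedy (m := m) sB)).
Qed.

Lemma otimes_seq_level a P lam c c' u N lc : adequate_block a P lam -> 0 < u ->
  (forall i, i < N -> c (u + i) = c u + c' i) ->
  ((c u)%:Z = 2 * (c u.-1)%:Z - lc + 1)%R ->
  (forall i, i < N * P ->
     otimes_seq a P c (u * P + i) = otimes_seq a P c (u * P) + otimes_seq a P c' i) /\
  ((otimes_seq a P c (u * P))%:Z =
     2 * (otimes_seq a P c (u * P).-1)%:Z - ((a P)%:Z * lc + lam) + 1)%R.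
Proof.
move=> ha u_gt0 shift char; have P_gt0 := ab_gt0 ha.
have uPE : otimes_seq a P c (u * P) = a P * c u.
  by rewrite -[u * P]addn0 otimes_seqE // (ab_0 ha) addn0.
split=> [i lt_i | ].
  rewrite uPE (divn_eq i P) addnA -mulnDl !otimes_seqE ?ltn_pmod // shift ?ltn_divLR //.
  by rewrite mulnDr addnA.
rewrite uPE predn_mul // otimes_seqE; last lia.
by have := ab_char ha; rewrite !PoszD !PoszM char; lia.
Qed.

Lemma independent_with_otimes a k lam c lc : adequate_block a (2 ^ k) lam ->
  independent_with c lc ->
  independent_with (otimes_seq a (2 ^ k) c) ((a (2 ^ k)%N)%:Z * lc + lam)%R.
Proof.
move=> ha [K indK]; exists (K + k) => j le_j.
have [shift char] := indK (j - k) (ltac:(lia)).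
have -> : 2 ^ j = 2 ^ (j - k) * 2 ^ k by rewrite -expnD subnK //; lia.
by apply: otimes_seq_level; rewrite ?expn_gt0.
Qed.

Lemma sidx_gt0 K s : `|s| < 2 ^ K -> 0 < sidx K s.
Proof.
move=> lt_s; rewrite /sidx absz_gt0 subr_eq0; apply/eqP => eq_s.
by move: lt_s; rewrite -eq_s absz_nat ltnn.
Qed.

Lemma sidx_mul K k s : sidx (K + k) ((2 ^ k)%N%:Z * s)%R = sidx K s * 2 ^ k.
Proof. by rewrite /sidx expnD PoszM [(_ * s)%R]mulrC -mulrBl abszM. Qed.

Lemma regular_eqs_otimes a k lam b lb sb cb K : adequate_block a (2 ^ k) lam ->
  `|sb| < 2 ^ K -> regular_eqs b lb sb cb K ->
  regular_eqs (otimes_seq a (2 ^ k) b) ((a (2 ^ k)%N)%:Z * lb + lam)%R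
    ((2 ^ k)%N%:Z * sb)%R (otimes_seq a (2 ^ k) cb) (K + k).
Proof.
move=> ha lt_sb [shift char]; rewrite /regular_eqs sidx_mul expnD.
exact: otimes_seq_level ha (sidx_gt0 lt_sb) shift char.
Qed.

Lemma independent_otimes_inv a k lam c : adequate_block a (2 ^ k) lam ->
  independent (otimes_seq a (2 ^ k) c) -> independent c.
Proof.
move=> ha [lt [K indK]]; set P := 2 ^ k.
have P_gt0 := ab_gt0 ha; have D_gt0 := adequate_block_gt0 ha.
have otimes_mulE j : otimes_seq a P c (j * P) = a P * c j.
  by rewrite -[j * P]addn0 otimes_seqE // (ab_0 ha) addn0.
have level j : K <= j ->
    (forall i, i < 2 ^ j -> c (2 ^ j + i) = c (2 ^ j) + c i) /\
    ((a P)%:Z * ((c (2 ^ j)%N)%:Z - 2 * (c (2 ^ j)%N.-1)%:Z) = 2 * (a P.-1)%:Z - lt + 1)%R.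
  move=> le_j; have X_gt0 : 0 < 2 ^ j by rewrite expn_gt0.
  have [shift char] := indK (j + k) (ltac:(lia)); rewrite expnD -/P in shift char.
  split=> [i lt_i | ].
    have := shift (i * P) (ltac:(by rewrite ltn_pmul2r)).
    rewrite -mulnDl !otimes_mulE -mulnDr => /eqP.
    by rewrite eqn_pmul2l // => /eqP.
  move: char; rewrite otimes_mulE predn_mul // otimes_seqE; last lia.
  by rewrite !PoszD !PoszM; lia.
exists (2 * (c (2 ^ K)%N.-1)%:Z + 1 - (c (2 ^ K)%N)%:Z)%R, K => j le_j.
have [shift char] := level j le_j; split => //.
have [_ charK] := level K (leqnn K).
have /mulfI D_inj : ((a P)%:Z != 0)%R by rewrite eqz_nat -lt0n.
by have := D_inj _ _ (etrans char (esym charK)); lia.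
Qed.

Lemma regular_otimes A k lam B lb sb cb : adequate_block (stanley A) (2 ^ k) lam ->
  stanley_set B -> regular_with (stanley B) lb sb cb ->
  exists cC, regular_with (stanley (otimes A k B))
               ((stanley A (2 ^ k))%:Z * lb + lam)%R ((2 ^ k)%N%:Z * sb)%R cC.
Proof.
move=> ha sB [[CB [sCB /functional_extensionality-> indCB]] [K regK]].
have [_ /functional_extensionality->] := stanley_otimes ha sB.
have [sCC eqCC] := stanley_otimes ha sCB.
exists (otimes_seq (stanley A) (2 ^ k) (stanley CB)); split.
  by exists (otimes A k CB); split=> //; apply: independent_with_otimes.
exists (K + `|sb| + k) => j le_j; have -> : j = j - k + k by lia.
apply: regular_eqs_otimes => //; last by apply: regK; lia.
by apply: leq_ltn_trans (ltn_expl _ (ltnSn 1)); lia.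
Qed.

Unset Implicit Arguments.
Local Open Scope ring_scope.

Theorem theorem2 (A B : seq nat) (k : nat) (lamA lamB sigmaB : int)
    (coreB : nat -> nat) :
  stanley_set A -> stanley_set B ->
  independent_with (stanley A) lamA ->
  regular_with (stanley B) lamB sigmaB coreB ->
  adequate A lamA 0 (stanley A) k ->
  let C := otimes A k B in
  [/\ stanley_set C,
      exists coreC, regular_with (stanley C)
                      ((stanley A (2 ^ k)%N)%:Z * lamB + lamA)
                      ((2 ^ k)%N%:Z * sigmaB) coreC,
      (independent (stanley C) <-> independent (stanley B)) &
      forall n : nat, (exists m, stanley C m = n) <->
        (exists2 x, x \in Astar A k & exists j, n = (stanley A (2 ^ k) * stanley B j + x)%N)].
Proof.
(* The independence of [S(A)] is already part of the adequacy of [k]. *)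
move=> sA sB _ regB adequate_k C.
have ha := adequate_block_stanley sA adequate_k; have P_gt0 := ab_gt0 ha.
have [sC eqC] := stanley_otimes ha sB.
split=> //; first exact: regular_otimes ha sB regB.
  rewrite (functional_extensionality _ _ eqC); split; first exact: independent_otimes_inv ha.
  by case=> lc indB; eexists; exact: independent_with_otimes ha indB.
move=> n; rewrite (functional_extensionality _ _ eqC).
split=> [/(otimes_seq_imageP _ _ _ P_gt0)[i lt_i [j ->]] | [_ /mem_mkseqP[i lt_i <-] [j ->]]].
  by exists (stanley A i); [apply/mem_mkseqP; exists i | exists j].
by apply/(otimes_seq_imageP _ _ _ P_gt0); exists i => //; exists j.
Qed.
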